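(* Let $W\in\mathbb{R}^{n\times n}$ be positive definite (i.e. $x^TWx>0$ for all nonzero $x$; $W$ need not be symmetric), with symmetric part $H=\frac12(W+W^T)$ and skew-symmetric part $S=\frac12(W-W^T)$. Let $B\in\mathbb{R}^{m\times n}$ with $\operatorname{rank}(B)<m\le n$, let $$A=\begin{pmatrix} W & B^T\\ -B & 0\end{pmatrix},$$ and let $b\in\mathbb{R}^{n+m}$ lie in the range of $A$. For $\omega>0$ let $P=\omega H$ and $$M=\begin{pmatrix} P & B^T\\ -B & 0\end{pmatrix}.$$ If $$\omega>\tfrac12\left(1+\rho\big(H^{-1/2}SH^{-1/2}\big)^2\right),$$ then the iteration $x^{(k+1)}=x^{(k)}+M^\dagger(b-Ax^{(k)})$, $k=0,1,2,\dots$, is convergent.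
   Context: $M^\dagger$ is the Moore–Penrose inverse of $M$; $\rho(\cdot)$ denotes the spectral radius; $H^{-1/2}$ is the inverse of the symmetric positive definite square root of $H$. The iteration is called convergent if the sequence $x^{(k)}$ converges (to a solution of $Ax=b$) for every initial guess $x^{(0)}$; equivalently, with $T=I-M^\dagger A$, the limit $\lim_{k\to\infty}T^k$ exists. *)

From HB Require Import structures.
From mathcomp Require Import all_boot all_order all_algebra.
From mathcomp Require Import all_classical all_reals all_analysis.
From mathcomp Require Import complex.
Set Implicit Arguments. Unset Strict Implicit. Unset Printing Implicit Defensive.
Import Order.TTheory GRing.Theory Num.Theory.
Import numFieldNormedType.Exports.
Local Open Scope ring_scope.
Local Open Scope classical_set_scope.

Definition posdef (R : realType) (n : nat) (W : 'M[R]_n) : Prop :=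
  forall x : 'cV[R]_n, x != 0 -> 0 < (x^T *m W *m x) ord0 ord0.

Definition symmetric_mx (R : realType) (n : nat) (Q : 'M[R]_n) : Prop :=
  Q^T = Q.

(* X is the Moore--Penrose inverse of M (the four Penrose conditions;
   for real matrices the adjoint is the transpose). *)
Definition is_MP_inverse (R : realType) (p q : nat)
    (M : 'M[R]_(p, q)) (X : 'M[R]_(q, p)) : Prop :=
  [/\ M *m X *m M = M, X *m M *m X = X,
      (M *m X)^T = M *m X & (X *m M)^T = X *m M].

Definition cmod (R : realType) (z : R[i]) : R :=
  Num.sqrt (complex.Re z ^+ 2 + complex.Im z ^+ 2).

Definition spectral_radius (R : realType) (n : nat) (K : 'M[R]_n) : R :=
  sup [set cmod z | z in [set z : R[i] |
         eigenvalue (map_mx (fun x : R => x%:C%C) K) z]].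

Fixpoint iterate (R : realType) (N : nat) (A X : 'M[R]_N) (b x0 : 'cV[R]_N)
    (k : nat) : 'cV[R]_N :=
  match k with
  | 0 => x0
  | k'.+1 => let x := iterate A X b x0 k' in x + X *m (b - A *m x)
  end.

Definition iteration_convergent (R : realType) (N : nat) (A X : 'M[R]_N)
    (b : 'cV[R]_N) : Prop :=
  forall x0 : 'cV[R]_N, exists2 xs : 'cV[R]_N,
    iterate A X b x0 k @[k --> \oo] --> xs & A *m xs = b.

(* Measure the error e_k of the iterates from x* = x0 - M^+ M (x0 - y), where
   A y = b.  Then e_k stays in the range of M^+ M and M e_(k+1) = (M - A) e_k,
   whose top block is (P - W) u_k, u_k being the top part of e_k.  Testing this
   against u_(k+1) eliminates the multiplier block since B u_(k+1) = 0, and with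
   c_k = H^(1/2) u_k and the skew matrix K = H^(-1/2) S H^(-1/2) it reads
   omega |c_(k+1)|^2 = <c_(k+1), (omega - 1) c_k - K c_k>.  As <c, K c> = 0 and
   |K c| <= rho(K) |c| for skew K, Cauchy-Schwarz gives
   omega^2 |c_(k+1)|^2 <= ((omega - 1)^2 + rho(K)^2) |c_k|^2, a contraction
   exactly when omega > (1 + rho(K)^2) / 2.  Finally e_(k+1) is a fixed linear
   image of c_k, so e_k -> 0. *)

From HB Require Import structures.
From mathcomp Require Import all_boot all_order all_algebra.
From mathcomp Require Import all_classical all_reals all_analysis.
From mathcomp Require Import complex.
From mathcomp Require Import ring lra.
Import Order.TTheory GRing.Theory Num.Theory.
Import numFieldNormedType.Exports.
Local Open Scope ring_scope.
Set Implicit Arguments. Unset Strict Implicit. Unset Printing Implicit Defensive.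

Definition dotc (R : realFieldType) n (u v : 'cV[R]_n) : R := (u^T *m v) 0 0.

Local Notation "''[' u , v ]" := (dotc u v) : ring_scope.
Local Notation "''[' u ]" := '[u, u] : ring_scope.

Section DotProduct.
Variable R : realFieldType.
Implicit Types (n : nat) (c : R).

Lemma dotcE n (u v : 'cV[R]_n) : '[u, v] = \sum_i u i 0 * v i 0.
Proof. by rewrite /dotc mxE; apply: eq_bigr => i _; rewrite mxE. Qed.

Lemma dotcC n (u v : 'cV[R]_n) : '[u, v] = '[v, u].
Proof. by rewrite !dotcE; apply: eq_bigr => i _; rewrite mulrC. Qed.

Lemma dotcDl n (u u' v : 'cV[R]_n) : '[u + u', v] = '[u, v] + '[u', v].
Proof. by rewrite !dotcE -big_split; apply: eq_bigr => i _; rewrite mxE mulrDl. Qed.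

Lemma dotcDr n (u v v' : 'cV[R]_n) : '[u, v + v'] = '[u, v] + '[u, v'].
Proof. by rewrite dotcC dotcDl !(dotcC _ u). Qed.

Lemma dotcZl n c (u v : 'cV[R]_n) : '[c *: u, v] = c * '[u, v].
Proof. by rewrite !dotcE mulr_sumr; apply: eq_bigr => i _; rewrite mxE mulrA. Qed.

Lemma dotcZr n c (u v : 'cV[R]_n) : '[u, c *: v] = c * '[u, v].
Proof. by rewrite dotcC dotcZl dotcC. Qed.

Lemma dotcNl n (u v : 'cV[R]_n) : '[- u, v] = - '[u, v].
Proof. by rewrite -scaleN1r dotcZl mulN1r. Qed.

Lemma dotcNr n (u v : 'cV[R]_n) : '[u, - v] = - '[u, v].
Proof. by rewrite -scaleN1r dotcZr mulN1r. Qed.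

Lemma dotcBl n (u u' v : 'cV[R]_n) : '[u - u', v] = '[u, v] - '[u', v].
Proof. by rewrite dotcDl dotcNl. Qed.

Lemma dotcBr n (u v v' : 'cV[R]_n) : '[u, v - v'] = '[u, v] - '[u, v'].
Proof. by rewrite dotcDr dotcNr. Qed.

Lemma dot0c n (v : 'cV[R]_n) : '[0, v] = 0.
Proof. by rewrite /dotc trmx0 mul0mx mxE. Qed.

Lemma dotc0 n (u : 'cV[R]_n) : '[u, 0] = 0.
Proof. by rewrite dotcC dot0c. Qed.

Lemma dotc_mulmxr n k (L : 'M[R]_(k, n)) (u : 'cV[R]_k) (v : 'cV[R]_n) :
  '[u, L *m v] = '[L^T *m u, v].
Proof. by rewrite /dotc trmx_mul trmxK mulmxA. Qed.

Lemma dotcc_ge0 n (u : 'cV[R]_n) : 0 <= '[u].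
Proof. by rewrite dotcE; apply: sumr_ge0 => i _; rewrite -expr2 sqr_ge0. Qed.

Lemma dotcc_eq0 n (u : 'cV[R]_n) : '[u] = 0 -> u = 0.
Proof.
rewrite dotcE => /eqP; rewrite psumr_eq0 => [/allP u0|i _]; last first.
  by rewrite -expr2 sqr_ge0.
apply/matrixP => i j; rewrite ord1 mxE.
by move: (u0 i (mem_index_enum _)); rewrite -expr2 sqrf_eq0 => /eqP.
Qed.

Lemma dotcc_gt0 n (u : 'cV[R]_n) : u != 0 -> 0 < '[u].
Proof. by move=> u0; rewrite lt_def dotcc_ge0 andbT; apply: contra_neq u0 => /dotcc_eq0. Qed.

Lemma entry_sqr_le_dotc n (u : 'cV[R]_n) i : u i 0 ^+ 2 <= '[u].
Proof.
rewrite dotcE (bigD1 i) //= -expr2 lerDl.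
by apply: sumr_ge0 => j _; rewrite -expr2 sqr_ge0.
Qed.

Lemma dotc_Cauchy_Schwarz n (u v : 'cV[R]_n) : '[u, v] ^+ 2 <= '[u] * '[v].
Proof.
have [/dotcc_eq0 ->|v0] := eqVneq '[v] 0; first by rewrite !dotc0 expr0n mulr0.
have v_gt0 : 0 < '[v] by rewrite lt_def v0 dotcc_ge0.
have := mulr_ge0 (dotcc_ge0 (u - ('[u, v] / '[v]) *: v)) (ltW v_gt0).
rewrite !(dotcBl, dotcBr, dotcZl, dotcZr) (dotcC v u).
set a := '[u, v]; set b := '[v]; set c := '[u].
have -> : (c - a / b * a - a / b * (a - a / b * b)) * b = c * b - a ^+ 2 by field.
by rewrite subr_ge0.
Qed.

Lemma dotc_skew n (K : 'M[R]_n) (u : 'cV[R]_n) : K^T = - K -> '[u, K *m u] = 0.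
Proof.
move=> skK; apply/eqP; rewrite -[_ == 0](mulrn_eq0 _ 2) mulr2n.
by rewrite {1}dotc_mulmxr skK mulNmx dotcNl dotcC addNr.
Qed.

End DotProduct.

Section PositiveDefinite.
Variables (R : realType) (n : nat).
Implicit Types W : 'M[R]_n.

Lemma posdef_dotc W x : posdef W -> x != 0 -> 0 < '[x, W *m x].
Proof. by move=> pW /pW; rewrite /dotc mulmxA. Qed.

Lemma posdef_dotc_le0 W x : posdef W -> '[x, W *m x] <= 0 -> x = 0.
Proof.
move=> pW; have [//|x0] := eqVneq x 0.
by rewrite leNgt posdef_dotc.
Qed.

Lemma posdef_trmx W : posdef W -> posdef W^T.
Proof.
move=> pW x x0; rewrite -mulmxA -/(dotc x (W^T *m x)) dotc_mulmxr trmxK dotcC.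
exact: posdef_dotc.
Qed.

Lemma posdefZ W c : 0 < c -> posdef W -> posdef (c *: W).
Proof. by move=> c0 pW x /pW; rewrite -scalemxAr -scalemxAl !mxE pmulr_rgt0. Qed.

Lemma posdef_sym_part W : posdef W -> posdef (2^-1 *: (W + W^T)).
Proof.
move=> pW; apply: posdefZ; first by rewrite invr_gt0.
move=> x x0; rewrite mulmxDr mulmxDl mxE.
by rewrite addr_gt0 // ?(posdef_trmx pW) // pW.
Qed.

Lemma posdef_unitmx W : posdef W -> W \in unitmx.
Proof.
move=> pW; rewrite unitmxE unitfE; apply/negP => /det0P [v v0 vW].
have : v^T = 0.
  by apply: (posdef_dotc_le0 (posdef_trmx pW)); rewrite -trmx_mul vW trmx0 dotc0.
by move/(congr1 trmx); rewrite trmxK trmx0 => vT0; rewrite vT0 eqxx in v0.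
Qed.

End PositiveDefinite.

Section SkewSpectralBound.
Variable R : realType.

Lemma continuous_dotc_mulmx n k (L : 'M[R]_(k, n)) :
  continuous (fun v : 'rV[R]_n => '[L *m v^T]).
Proof.
have entry i : continuous (fun v : 'rV[R]_n => (L *m v^T) i 0).
  have -> : (fun v : 'rV[R]_n => (L *m v^T) i 0) =
      (fun v => \sum_(j <- index_enum 'I_n) (fun j (v : 'rV[R]_n) => L i j * v 0 j) j v).
    by apply/funext => v; rewrite mxE; apply: eq_bigr => j _; rewrite mxE.
  apply: continuous_big; first exact: add_continuous.
  move=> j _ x; apply: continuousM; [exact: cst_continuous | exact: coord_continuous].
have -> : (fun v : 'rV[R]_n => '[L *m v^T]) =
    (fun v => \sum_(i <- index_enum 'I_k)
       (fun i (v : 'rV[R]_n) => (L *m v^T) i 0 * (L *m v^T) i 0) i v).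
  by apply/funext => v; rewrite dotcE.
apply: continuous_big; first exact: add_continuous.
by move=> i _ x; apply: continuousM; apply: entry.
Qed.

Lemma mx_norm_le m n (v : 'M[R]_(m, n)) c :
  0 <= c -> (forall i j, `|v i j| <= c) -> `|v| <= c.
Proof. by move=> c0 vc; rewrite [leLHS]/Num.norm /= mx_normrE; apply: bigmax_le. Qed.

Lemma exists_dotc_mulmx_max n (K : 'M[R]_n.+1) :
  exists2 x : 'cV[R]_n.+1, '[x] = 1 & forall y, '[K *m y] <= '[K *m x] * '[y].
Proof.
pose sphere := [set v : 'rV[R]_n.+1 | '[v^T] = 1]%classic.
have sphere0 : (sphere !=set0)%classic.
  exists (delta_mx 0 0); rewrite /sphere /= /dotc trmxK trmx_delta mul_delta_mx mxE.
  by rewrite !eqxx.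
have sqr_cont : continuous (fun v : 'rV[R]_n.+1 => '[v^T]).
  by have := continuous_dotc_mulmx (L := 1%:M : 'M[R]_n.+1); under eq_fun do rewrite mul1mx.
have sphere_compact : compact sphere.
  apply: bounded_closed_compact.
    exists 1; split; first by rewrite num_real.
    move=> c c1 v sv; apply: mx_norm_le; first by rewrite (le_trans _ (ltW c1)).
    move=> i j; rewrite ord1.
    have := entry_sqr_le_dotc v^T j; rewrite sv mxE => vj.
    apply: le_trans (ltW c1); rewrite ler_norml; apply/andP; split; nra.
  exact: (preimage_closed (fun x _ => sqr_cont x) (@closed_eq R 1)).
have [v sv vmax] := compact_EVT_max sphere0 sphere_compact
  (continuous_subspaceT (continuous_dotc_mulmx (L := K))).
exists v^T; first by move: sv; rewrite inE.
move=> y; have [->|y0] := eqVneq y 0; first by rewrite mulmx0 !dotc0 mulr0.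
set l := Num.sqrt '[y].
have l0 : 0 < l by rewrite sqrtr_gt0 dotcc_gt0.
have ll : l * l = '[y] by rewrite -expr2 sqr_sqrtr // dotcc_ge0.
have sy : (l^-1 *: y)^T \in sphere.
  by rewrite inE /sphere /= trmxK dotcZl dotcZr -ll; field; exact: lt0r_neq0.
have := vmax _ sy; rewrite !trmxK -scalemxAr !(dotcZl, dotcZr) => Kyv.
have -> : '[K *m y] = l^-1 * (l^-1 * '[K *m y]) * '[y].
  by rewrite -ll; field; exact: lt0r_neq0.
by rewrite ler_wpM2r // dotcc_ge0.
Qed.

(* A maximizer of the Rayleigh quotient of [K^T K] is an eigenvector: perturbing
   [x] to [x + t y] and letting [t -> 0] kills the orthogonal residual [y]. *)
Lemma dotc_mulmx_max_eigenvector n (K : 'M[R]_n) x :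
  '[x] = 1 -> (forall y, '[K *m y] <= '[K *m x] * '[y]) ->
  K^T *m (K *m x) = '[K *m x] *: x.
Proof.
move=> x1 Kmax; set s := '[K *m x] in Kmax *.
pose y := K^T *m (K *m x) - s *: x.
suff /dotcc_eq0/eqP : '[y] = 0 by rewrite subr_eq0 => /eqP.
have Kxy : '[K *m x, K *m y] = '[y] + s * '[x, y].
  by rewrite dotc_mulmxr -[K^T *m _](subrK (s *: x)) dotcDl dotcZl.
clearbody y.
set beta := '[y]; set gamma := s * beta - '[K *m y].
have gamma0 : 0 <= gamma by rewrite subr_ge0; exact: Kmax.
have beta0 : 0 <= beta by exact: dotcc_ge0.
have perturb t : 2 * t * beta <= t ^+ 2 * gamma.
  have := Kmax (x + t *: y).
  rewrite mulmxDr -scalemxAr !(dotcDl, dotcDr, dotcZl, dotcZr).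
  rewrite (dotcC (K *m y) (K *m x)) (dotcC y x) x1 -/s Kxy /gamma.
  by rewrite /beta expr2; nra.
pose t := beta / (gamma + 1).
have betat : beta = t * (gamma + 1) by rewrite /t; field; lra.
have := perturb t; clearbody t beta gamma; rewrite betat => tle.
have t0 : t ^+ 2 <= 0.
  have E : 2 * t * (t * (gamma + 1)) = t ^+ 2 * gamma + (t ^+ 2 * gamma + 2 * t ^+ 2).
    by ring.
  by rewrite E in tle; have := mulr_ge0 (sqr_ge0 t) gamma0; lra.
have : t ^+ 2 == 0 by rewrite eq_le t0 sqr_ge0.
by rewrite sqrf_eq0 => /eqP ->; rewrite mul0r.
Qed.

Lemma eigenvalue_le_spectral_radius n (K : 'M[R]_n) (z : R[i]) :
  eigenvalue (map_mx (fun x : R => x%:C%C) K) z -> cmod z <= spectral_radius K.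
Proof.
move=> Kz; apply: sup_upper_bound; last by exists z.
split; first by exists (cmod z); exists z.
have [rs rsE] := closed_field_poly_normal (char_poly (map_mx (fun x : R => x%:C%C) K)).
exists (\sum_(r <- rs) cmod r) => _ [w Kw <-].
have wrs : w \in rs.
  move: Kw; rewrite /= eigenvalue_root_char rsE rootZ ?root_prod_XsubC //.
  by rewrite (monicP (char_poly_monic _)) oner_eq0.
rewrite (big_rem w wrs) /= lerDl; apply: sumr_ge0 => r _; exact: sqrtr_ge0.
Qed.

(* An eigenvector [x] of [K^T K = - K^2] with eigenvalue [s > 0] yields the
   eigenvalue [i sqrt s] of [K], with left eigenvector [x^T K + i sqrt s x^T]. *)
Lemma skew_eigenvalue_sqrt n (K : 'M[R]_n) (x : 'cV[R]_n) s :
  K^T = - K -> x != 0 -> 0 < s -> K^T *m (K *m x) = s *: x ->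
  eigenvalue (map_mx (fun a : R => a%:C%C) K) (Complex 0 (Num.sqrt s)).
Proof.
move=> skK x0 s_gt0 KKx; set f := fun a : R => a%:C%C; set sigma := Num.sqrt s.
have sigma_neq0 : sigma != 0 by rewrite sqrtr_eq0 -ltNge.
pose r := x^T.
have rKK : r *m K *m K = - (s *: r).
  have <- : (K *m (K *m x))^T = r *m K *m K.
    by rewrite !trmx_mul skK !mulmxN mulNmx opprK.
  by rewrite -[K in K *m (_ *m _)]opprK -skK mulNmx KKx linearN /= linearZ.
pose z : R[i] := Complex 0 sigma.
have zz : z * z = - f s.
  by rewrite /z /f -[s](sqr_sqrtr (ltW s_gt0)); simpc; rewrite expr2.
pose w := map_mx f (r *m K) + z *: map_mx f r.
apply/eigenvalueP; exists w.
  rewrite /w mulmxDl -scalemxAl -!map_mxM rKK map_mxN map_mxZ.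
  by rewrite scalerDr scalerA zz scaleNr addrC.
apply: contra_neq x0 => w0; apply/trmx_inj; rewrite trmx0; apply/matrixP => i j.
have := congr1 (fun N : 'rV[R[i]]_n => complex.Im (N i j)) w0.
rewrite /w !mxE /z /f /= mul0r !add0r => /eqP.
by rewrite mulf_eq0 (negbTE sigma_neq0) => /eqP.
Qed.

Lemma skew_dotc_mulmx_le n (K : 'M[R]_n) (c : 'cV[R]_n) : K^T = - K ->
  '[K *m c] <= spectral_radius K ^+ 2 * '[c].
Proof.
case: n K c => [|n] K c skK; first by rewrite [c]flatmx0 mulmx0 !dotc0 mulr0.
have [x x1 Kmax] := exists_dotc_mulmx_max K.
set s := '[K *m x] in Kmax.
suff s_le : s <= spectral_radius K ^+ 2.
  by apply: le_trans (Kmax c) _; rewrite ler_wpM2r // dotcc_ge0.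
have [s_le0|] := boolP (s <= 0); first by rewrite (le_trans s_le0) ?sqr_ge0.
rewrite -ltNge => s_gt0.
have x0 : x != 0 by apply: contra_eq_neq x1 => ->; rewrite dotc0 eq_sym oner_neq0.
have := eigenvalue_le_spectral_radius (skew_eigenvalue_sqrt skK x0 s_gt0
  (dotc_mulmx_max_eigenvector x1 Kmax)).
rewrite /cmod /= expr0n add0r sqrtr_sqr ger0_norm ?sqrtr_ge0 // => sqrt_le.
have rho0 : 0 <= spectral_radius K := le_trans (sqrtr_ge0 _) sqrt_le.
by rewrite -(sqr_sqrtr (ltW s_gt0)) ler_sqr ?nnegrE ?sqrtr_ge0.
Qed.

End SkewSpectralBound.

Section SaddlePointMatrices.
Variables (R : realType) (n m : nat).
Implicit Types (P W : 'M[R]_n) (B : 'M[R]_(m, n)) (e : 'cV[R]_(n + m)).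

Definition saddle P B : 'M[R]_(n + m) := block_mx P B^T (- B) 0.

Lemma mul_saddle P B e :
  saddle P B *m e = col_mx (P *m usubmx e + B^T *m dsubmx e) (- B *m usubmx e).
Proof. by rewrite -{1}[e]vsubmxK mul_block_col mul0mx addr0. Qed.

Lemma tr_saddle P B : (saddle P B)^T = saddle P^T (- B).
Proof. by rewrite /saddle tr_block_mx trmxK opprK trmx0. Qed.

Lemma mul_saddleB P W B e :
  (saddle P B - saddle W B) *m e = col_mx ((P - W) *m usubmx e) 0.
Proof.
rewrite mulmxBl !mul_saddle opp_col_mx add_col_mx subrr mulmxBl; congr col_mx.
by rewrite opprD addrACA subrr addr0.
Qed.

(* The constraint row [- B u = 0] makes the multiplier term [B^T v] invisible
   to the energy [u^T P u]. *)
Lemma saddle_energy P B e g : saddle P B *m e = col_mx g 0 ->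
  '[usubmx e, P *m usubmx e] = '[usubmx e, g].
Proof.
rewrite mul_saddle => /eq_col_mx [<- /eqP]; rewrite mulNmx oppr_eq0 => /eqP Bu0.
by rewrite dotcDr (dotc_mulmxr B^T) trmxK Bu0 dot0c addr0.
Qed.

Lemma saddle_kernel_usubmx P B e : posdef P -> saddle P B *m e = 0 -> usubmx e = 0.
Proof.
move=> pP Pe0; apply: (posdef_dotc_le0 pP).
by rewrite (@saddle_energy _ B _ 0) ?dotc0 // Pe0 col_mx0.
Qed.

Lemma saddle_kernel_sub P W B e : posdef P ->
  saddle P B *m e = 0 -> saddle W B *m e = 0.
Proof.
move=> pP Pe0; apply/eqP; rewrite -[_ == 0]/(_ == _).
have := mul_saddleB P W B e; rewrite mulmxBl Pe0 (saddle_kernel_usubmx pP Pe0).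
by rewrite mulmx0 col_mx0 sub0r => /eqP; rewrite oppr_eq0.
Qed.

End SaddlePointMatrices.

(* [M X] is the orthogonal projector onto the range of [M], which contains the
   range of [A] as soon as [ker M^T] is contained in [ker A^T]. *)
Lemma MP_inverse_range (R : realType) p q r (M : 'M[R]_(p, q)) (X : 'M[R]_(q, p))
    (A : 'M[R]_(p, r)) :
  is_MP_inverse M X -> (forall w : 'cV_p, M^T *m w = 0 -> A^T *m w = 0) ->
  forall f : 'cV_r, M *m (X *m (A *m f)) = A *m f.
Proof.
move=> [MXM _ MXsym _] kerMA f.
set w := A *m f - M *m (X *m (A *m f)).
have MTw : M^T *m w = 0.
  have MTMX : M^T *m M *m X = M^T by rewrite -mulmxA -MXsym -trmx_mul MXM.
  by rewrite mulmxBr !mulmxA MTMX subrr.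
have : '[w] = 0.
  by rewrite {2}/w dotcBr dotc_mulmxr (dotc_mulmxr M) MTw kerMA // !dot0c subrr.
by move/dotcc_eq0/eqP; rewrite subr_eq0 => /eqP.
Qed.

Section SplittingIteration.
Variables (R : realType) (N : nat) (A M X : 'M[R]_N) (b y x0 : 'cV[R]_N).
Hypotheses (MXM : M *m X *m M = M) (XMX : X *m M *m X = X).
Hypothesis MXA : forall f : 'cV_N, M *m (X *m (A *m f)) = A *m f.
Hypothesis kerMA : forall z : 'cV_N, M *m z = 0 -> A *m z = 0.
Hypothesis Ay : A *m y = b.

(* Every update lies in the range of [X = X M X], so the component
   [(1 - X M) (x0 - y)] of [x_k - y] never changes; it is that of the limit. *)
Definition splitting_limit : 'cV[R]_N := x0 - X *m (M *m (x0 - y)).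

Local Notation err k := (iterate A X b x0 k - splitting_limit).

Lemma splitting_limit_solution : A *m splitting_limit = b.
Proof.
suff /kerMA/eqP : M *m (splitting_limit - y) = 0.
  by rewrite mulmxBr subr_eq0 Ay => /eqP.
by rewrite /splitting_limit addrAC mulmxBr !mulmxA MXM subrr.
Qed.

Lemma splitting_err_step x :
  x + X *m (b - A *m x) - splitting_limit =
  (x - splitting_limit) - X *m (A *m (x - splitting_limit)).
Proof.
by rewrite -splitting_limit_solution -mulmxBr -[splitting_limit - x]opprB !mulmxN addrAC.
Qed.

Lemma splitting_err_range k : X *m (M *m err k) = err k.
Proof.
elim: k => [|k IHk].
  by rewrite /= /splitting_limit opprB addrC subrK !mulmxA XMX.
by rewrite /= splitting_err_step mulmxBr mulmxBr IHk !mulmxA XMX.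
Qed.

Lemma splitting_err_succ k : err k.+1 = X *m ((M - A) *m err k).
Proof.
by rewrite /= splitting_err_step -{1}(splitting_err_range k) -mulmxBr -mulmxBl.
Qed.

Lemma mul_splitting_err_succ k : M *m err k.+1 = (M - A) *m err k.
Proof.
rewrite splitting_err_succ; move: (err k) => e.
by rewrite mulmxBl !mulmxBr MXA !mulmxA MXM.
Qed.

Lemma splitting_limit_cvg :
  (err k @[k --> \oo] --> (0 : 'cV[R]_N))%classic ->
  (iterate A X b x0 k @[k --> \oo] --> splitting_limit)%classic.
Proof.
move=> err0; have -> : iterate A X b x0 = fun k => splitting_limit + err k.
  by apply/funext => k; rewrite addrC subrK.
by rewrite -[L in (_ --> L)%classic]addr0; apply: cvgD err0; exact: cvg_cst.
Qed.

End SplittingIteration.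

Lemma skew_contraction (R : realType) n (K : 'M[R]_n) (a c : 'cV[R]_n) (omega : R) :
  K^T = - K -> omega * '[a] = '[a, (omega - 1) *: c - K *m c] ->
  omega ^+ 2 * '[a] <= ((omega - 1) ^+ 2 + spectral_radius K ^+ 2) * '[c].
Proof.
move=> skK; set d := _ - _; set T := _ + _ => aE.
have dT : '[d] <= T * '[c].
  rewrite !(dotcBl, dotcBr, dotcZl, dotcZr) (dotcC (K *m c) c) (dotc_skew c skK).
  by have := skew_dotc_mulmx_le c skK; rewrite /T; lra.
have := dotc_Cauchy_Schwarz a d; rewrite -aE.
have T0 : 0 <= T by rewrite addr_ge0 ?sqr_ge0.
have [a0|a_neq0] := eqVneq '[a] 0; first by rewrite a0 !mulr0 => _; exact: mulr_ge0 T0 (dotcc_ge0 _).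
have a_gt0 : 0 < '[a] by rewrite lt_def a_neq0 dotcc_ge0.
rewrite exprMn expr2 mulrA => /le_trans/(_ (ler_wpM2l (ltW a_gt0) dT)).
by rewrite [X in _ <= X]mulrC ler_pM2r.
Qed.

Section SaddleContraction.
Variables (R : realType) (n m : nat) (W Hh : 'M[R]_n) (B : 'M[R]_(m, n)) (omega : R).
Let H := 2^-1 *: (W + W^T).
Let S := 2^-1 *: (W - W^T).
Let K := invmx Hh *m S *m invmx Hh.
Hypotheses (Hh_sym : Hh^T = Hh) (Hh_unit : Hh \in unitmx) (Hh_sqr : Hh *m Hh = H).

Lemma dotc_sym_part (u v : 'cV[R]_n) : '[u, H *m v] = '[Hh *m u, Hh *m v].
Proof. by rewrite -Hh_sqr -mulmxA dotc_mulmxr Hh_sym. Qed.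

Lemma dotc_skew_part (u v : 'cV[R]_n) : '[u, S *m v] = '[Hh *m u, K *m (Hh *m v)].
Proof.
have SK : S = Hh *m K *m Hh by rewrite /K !mulmxA mulmxV // mul1mx mulmxKV.
by rewrite SK -!mulmxA dotc_mulmxr Hh_sym.
Qed.

Lemma trmx_normalized_skew_part : K^T = - K.
Proof.
have skS : S^T = - S by rewrite /S linearZ /= linearB /= trmxK -scalerN opprB.
by rewrite /K !trmx_mul trmx_inv Hh_sym skS mulNmx mulmxN mulmxA.
Qed.

(* With [P = omega H] and [W = H + S], the top block of the error equation reads
   [omega '[a] = '[a, (omega - 1) c - K c]] for [a = Hh u'] and [c = Hh u]. *)
Lemma saddle_contraction (e e' : 'cV[R]_(n + m)) :
  saddle (omega *: H) B *m e' = col_mx ((omega *: H - W) *m usubmx e) 0 ->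
  omega ^+ 2 * '[Hh *m usubmx e'] <=
    ((omega - 1) ^+ 2 + spectral_radius K ^+ 2) * '[Hh *m usubmx e].
Proof.
move/saddle_energy; set u := usubmx e; set u' := usubmx e' => energy.
apply: skew_contraction trmx_normalized_skew_part _.
have WHS : W = H + S by apply/matrixP => i j; rewrite !mxE; field.
rewrite -scalemxAl dotcZr dotc_sym_part in energy.
have PW : omega *: H - W = (omega - 1) *: H - S.
  by rewrite WHS scalerBl scale1r opprD addrA.
by rewrite energy PW mulmxBl -scalemxAl !dotcBr !dotcZr dotc_sym_part dotc_skew_part.
Qed.

End SaddleContraction.

Lemma geometric_bound (R : numDomainType) (h : nat -> R) (theta : R) :
  0 <= theta -> (forall k, h k.+1 <= theta * h k) -> forall k, h k <= theta ^+ k * h 0.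
Proof.
move=> theta0 hS; elim=> [|k IHk]; first by rewrite expr0 mul1r.
by rewrite exprS -mulrA (le_trans (hS k)) // ler_wpM2l.
Qed.

Lemma mulmx_entry_sqr_le (R : realType) p q (L : 'M[R]_(p, q)) (c : 'cV[R]_q) i :
  (L *m c) i 0 ^+ 2 <= '[(row i L)^T] * '[c].
Proof.
have -> : (L *m c) i 0 = '[(row i L)^T, c].
  by rewrite dotcE mxE; apply: eq_bigr => j _; rewrite !mxE.
exact: dotc_Cauchy_Schwarz.
Qed.

Lemma cvg0_entry_sqr_geometric (R : realType) p q (v : nat -> 'M[R]_(p, q)) C theta :
  0 <= theta < 1 -> (forall k i j, v k i j ^+ 2 <= C * theta ^+ k) ->
  (v k @[k --> \oo] --> (0 : 'M[R]_(p, q)))%classic.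
Proof.
move=> /andP[theta0 theta1] vC; apply/cvgr0Pnorm_lt => eps eps0.
have C1 : 0 < `|C| + 1 by rewrite ltr_pwDr.
have bound0 : 0 < (eps / 2) ^+ 2 / (`|C| + 1) by rewrite divr_gt0 // exprn_gt0 // divr_gt0.
have theta_lt1 : `|theta| < 1 by rewrite ger0_norm.
apply: filterS ((cvgr0Pnorm_lt _).1 (cvg_expr theta_lt1) _ bound0) => k.
rewrite ger0_norm ?exprn_ge0 // => small.
apply: (@le_lt_trans _ _ (eps / 2)); last by lra.
apply: mx_norm_le => [|i j]; first by lra.
have : v k i j ^+ 2 <= (eps / 2) ^+ 2.
  apply: (le_trans (vC k i j)); apply: (@le_trans _ _ ((`|C| + 1) * theta ^+ k)).
    by rewrite ler_wpM2r ?exprn_ge0 // (le_trans (ler_norm C)) // lerDl.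
  by rewrite -ler_pdivlMl // ltW // mulrC.
have eps2 : 0 <= eps / 2 by lra.
by move=> vle; rewrite -ler_sqr ?nnegrE // real_normK ?num_real.
Qed.

Lemma cvg0_dotc_contraction (R : realType) N p (f : nat -> 'cV[R]_N)
    (c : nat -> 'cV[R]_p) (L : 'M[R]_(N, p)) theta :
  0 <= theta < 1 -> (forall k, '[c k.+1] <= theta * '[c k]) ->
  (forall k, f k.+1 = L *m c k) -> (f k @[k --> \oo] --> (0 : 'cV[R]_N))%classic.
Proof.
move=> /[dup] /andP[theta0 _] theta01 cS fS; rewrite -cvg_shiftS.
have decay := geometric_bound (h := fun k => '[c k]) theta0 cS.
apply: (@cvg0_entry_sqr_geometric _ _ _ _ ((\sum_i '[(row i L)^T]) * '[c 0]) theta) => //.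
move=> k i j; rewrite ord1 /= fS mulrAC.
apply: (le_trans (mulmx_entry_sqr_le _ _ _)).
apply: (@le_trans _ _ ('[(row i L)^T] * (theta ^+ k * '[c 0]))).
  by rewrite ler_wpM2l ?dotcc_ge0 // decay.
rewrite mulrA ler_wpM2r ?dotcc_ge0 // ler_wpM2r ?exprn_ge0 //.
by rewrite (bigD1 i) //= lerDl sumr_ge0 // => j' _; exact: dotcc_ge0.
Qed.

Theorem theorem2 (R : realType) (n m : nat)
  (W : 'M[R]_n) (B : 'M[R]_(m, n)) (b : 'cV[R]_(n + m)) (omega : R)
  (Hhalf : 'M[R]_n) (X : 'M[R]_(n + m)) :
  posdef W ->
  (\rank B < m)%N -> (m <= n)%N ->
  (exists y : 'cV[R]_(n + m), block_mx W B^T (- B) 0 *m y = b) ->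
  0 < omega ->
  symmetric_mx Hhalf -> posdef Hhalf ->
  Hhalf *m Hhalf = 2^-1 *: (W + W^T) ->
  is_MP_inverse (block_mx (omega *: (2^-1 *: (W + W^T))) B^T (- B) 0) X ->
  2^-1 * (1 + spectral_radius
            (invmx Hhalf *m (2^-1 *: (W - W^T)) *m invmx Hhalf) ^+ 2) < omega ->
  iteration_convergent (block_mx W B^T (- B) 0) X b.
Proof.
move=> pW _ _ [y Ay] omega_gt0 Hh_sym Hh_pd Hh_sqr MP omega_big x0.
set P := omega *: _ in MP; set rho := spectral_radius _ in omega_big.
rewrite -/(saddle W B) in Ay *; rewrite -/(saddle P B) in MP.
have pP : posdef P := posdefZ omega_gt0 (posdef_sym_part pW).
have [MXM XMX _ _] := MP.
have kerMA := saddle_kernel_sub (B := B) W pP.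
have MXA : forall f : 'cV_(n + m), saddle P B *m (X *m (saddle W B *m f)) = saddle W B *m f.
  apply: (MP_inverse_range MP) => w; rewrite !tr_saddle.
  exact: saddle_kernel_sub (posdef_trmx pP).
exists (splitting_limit (saddle P B) X y x0); last exact: splitting_limit_solution.
apply: splitting_limit_cvg; set xs := splitting_limit _ _ _ _.
have Hh_unit := posdef_unitmx Hh_pd.
apply: (cvg0_dotc_contraction
  (c := fun k => Hhalf *m usubmx (iterate (saddle W B) X b x0 k - xs))
  (L := X *m col_mx (P - W) 0 *m invmx Hhalf)
  (theta := ((omega - 1) ^+ 2 + rho ^+ 2) / omega ^+ 2)).
- rewrite divr_ge0 ?addr_ge0 ?sqr_ge0 //= ltr_pdivrMr ?exprn_gt0 // mul1r.
  by rewrite sqrrB1 !expr2; nra.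
- move=> k; rewrite mulrAC ler_pdivlMr ?exprn_gt0 // mulrC.
  apply: (saddle_contraction (B := B)) => //.
  by rewrite -/P /xs mul_splitting_err_succ // mul_saddleB.
- move=> k; rewrite /xs splitting_err_succ // mul_saddleB.
  by rewrite -!mulmxA mulKmx // mul_col_mx mul0mx.
Qed.
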